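(* For distinct $a,b$, in $A(\mathcal{H}^+)$: $[E^u_{ba}]=[\bar E^u_{ba}]$, $[E^t_{ba}]=[\bar E^t_{ba}]$ and $[\Lambda_{ab}]=[\Lambda_{ba}]$.
   Context: $\mathfrak{h}$ is an $\ell$-dimensional complex space with orthonormal basis $h_1,\dots,h_\ell$; $\mathcal{H}=M(1,0)$ the free bosonic vertex operator algebra generated by Heisenberg modes $h(n)$ on vacuum $\mathbf{1}$; $\mathcal{H}^+$ the fixed points of the automorphism induced by $h\mapsto-h$; $A(\mathcal{H}^+)=\mathcal{H}^+/O(\mathcal{H}^+)$ Zhu's algebra ($O$ spanned by $u\circ v=\sum_{i\ge0}\binom{\mathrm{wt}\,u}{i}u_{i-2}v$, product induced by $u*v=\sum_{i\ge0}\binom{\mathrm{wt}\,u}{i}u_{i-1}v$), $[u]=u+O(\mathcal{H}^+)$. For distinct $a,b$ and $m\ge1$ let $S_{ab}(1,m)=h_a(-1)h_b(-m)\mathbf{1}$ and define $E^u_{ab}=5S_{ab}(1,2)+25S_{ab}(1,3)+36S_{ab}(1,4)+16S_{ab}(1,5)$, $\bar E^u_{ba}=S_{ab}(1,1)+14S_{ab}(1,2)+41S_{ab}(1,3)+44S_{ab}(1,4)+16S_{ab}(1,5)$, $E^t_{ab}=-16\big(3S_{ab}(1,2)+14S_{ab}(1,3)+19S_{ab}(1,4)+8S_{ab}(1,5)\big)$, $\bar E^t_{ba}=-16\big(5S_{ab}(1,2)+18S_{ab}(1,3)+21S_{ab}(1,4)+8S_{ab}(1,5)\big)$, $\Lambda_{ab}=45S_{ab}(1,2)+190S_{ab}(1,3)+240S_{ab}(1,4)+96S_{ab}(1,5)$;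 so $E^u_{ba}$, $E^t_{ba}$, $\Lambda_{ba}$ are given by the same formulas with $a$ and $b$ interchanged. *)

From HB Require Import structures.
From mathcomp Require Import all_boot all_order all_algebra.
From mathcomp Require Import algC.
Set Implicit Arguments. Unset Strict Implicit. Unset Printing Implicit Defensive.
Import Order.TTheory GRing.Theory Num.Theory.
Local Open Scope ring_scope.

Section FreeBoson.
Variable l : nat.

(* A monomial h_{a1}(-n1) ... h_{ar}(-nr) 1 is the word [:: (a1,n1); ...];
   the order of the letters is irrelevant (creation operators commute):
   words are compared up to permutation ([perm_eq]). *)
Definition mono := seq ('I_l * nat).
Definition vec := seq (algC * mono).

Definition coef (w : vec) (m : mono) : algC :=
  \sum_(x <- w | perm_eq x.2 m) x.1.
Definition veq (x y : vec) : Prop := forall m, coef x m = coef y m.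

Definition wf (w : vec) : bool := all (fun x => all (fun p => 0 < p.2)%N x.2) w.

Definition vadd (x y : vec) : vec := x ++ y.
Definition vscale (c : algC) (x : vec) : vec := [seq (c * t.1, t.2) | t <- x].
Definition vsub (x y : vec) : vec := x ++ vscale (-1) y.
Definition vsum (s : seq vec) : vec := flatten s.

Definition weight (m : mono) : nat := sumn [seq p.2 | p <- m].
Definition wtmax (w : vec) : nat := foldr maxn 0%N [seq weight t.2 | t <- w].

Definition create (a : 'I_l) (n : nat) (w : vec) : vec :=
  [seq (t.1, (a, n) :: t.2) | t <- w].
(* annihilation operator h_a(n), n >= 0 (h_a(0) = 0 on M(1,0));
   [h_a(n), h_b(-k)] = n delta_{ab} delta_{nk} *)
Definition annih (a : 'I_l) (n : nat) (w : vec) : vec :=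
  [seq (t.1 * (n * count_mem (a, n) t.2)%:R, rem (a, n) t.2) | t <- w].

(* Modes u_q of the vertex operator Y(u,z) = sum_q u_q z^{-q-1} of a monomial u,
   defined by the iterate (associativity) formula with a = h_a(-1)1:
   (h_a(-n) v)_q = sum_{i>=0} (-1)^i binom(-n,i)
        ( h_a(-n-i) v_(q+i) - (-1)^n v_(q-n-i) h_a(i) ),
   where (-1)^i binom(-n,i) = binom(n+i-1,i).  On a given vector w the sum is
   finite; it is truncated at i = wtmax w + wt v + |q|, beyond which all terms
   vanish (v_k w = 0 for k >= wt v + wt w, and h_a(i) w = 0 for i > wt w). *)
Fixpoint modeM (u : mono) (q : int) (w : vec) {struct u} : vec :=
  match u with
  | [::] => if q == (-1)%R then w else [::]
  | p :: v =>
      let a := p.1 in let n := p.2 in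
      vsum [seq vadd
               (vscale ('C(n + i - 1, i))%:R (create a (n + i) (modeM v (q + i%:Z) w)))
               (vscale (- ((-1) ^+ n * ('C(n + i - 1, i))%:R))
                       (modeM v (q - n%:Z - i%:Z) (annih a i w)))
           | i <- iota 0 (wtmax w + weight v + absz q).+1]
  end.

Definition vmode (u : vec) (q : int) (w : vec) : vec :=
  vsum [seq vscale t.1 (modeM t.2 q w) | t <- u].

(* the automorphism theta induced by h |-> -h *)
Definition theta (w : vec) : vec := [seq ((-1) ^+ size t.2 * t.1, t.2) | t <- w].

Definition inHplus (u : vec) : Prop := wf u /\ veq (theta u) u.

Definition homog (k : nat) (u : vec) : Prop :=
  forall m, coef u m != 0 -> weight m = k.

(* Zhu's product u o v = sum_{i>=0} binom(wt u, i) u_{i-2} v, for u of weight k *)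
Definition circ (k : nat) (u v : vec) : vec :=
  vsum [seq vscale ('C(k, i))%:R (vmode u (i%:Z - 2) v) | i <- iota 0 k.+1].

(* x lies in O(H^+): the span of u o v, u in H^+ homogeneous, v in H^+
   (scalars are absorbed in v) *)
Definition inO (x : vec) : Prop :=
  exists s : seq (nat * vec * vec),
    (forall t, t \in s -> [/\ inHplus t.1.2, homog t.1.1 t.1.2 & inHplus t.2]) /\
    veq x (vsum [seq circ t.1.1 t.1.2 t.2 | t <- s]).

Definition zhu_eq (x y : vec) : Prop := inO (vsub x y).

Definition S (a b : 'I_l) (m : nat) : vec := [:: (1, [:: (a, 1%N); (b, m)])].

Definition lc (a b : 'I_l) (cs : seq (nat * nat)) : vec :=
  vsum [seq vscale (c.2)%:R (S a b c.1) | c <- cs].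

Definition Eu (a b : 'I_l) : vec := lc a b [:: (2, 5); (3, 25); (4, 36); (5, 16)]%N.
(* \bar E^u_{ba} (expressed through S_{ab}) *)
Definition Eubar_ba (a b : 'I_l) : vec :=
  lc a b [:: (1, 1); (2, 14); (3, 41); (4, 44); (5, 16)]%N.
Definition Et (a b : 'I_l) : vec :=
  vscale (-16) (lc a b [:: (2, 3); (3, 14); (4, 19); (5, 8)]%N).
(* \bar E^t_{ba} (expressed through S_{ab}) *)
Definition Etbar_ba (a b : 'I_l) : vec :=
  vscale (-16) (lc a b [:: (2, 5); (3, 18); (4, 21); (5, 8)]%N).
Definition Lambda (a b : 'I_l) : vec :=
  lc a b [:: (2, 45); (3, 190); (4, 240); (5, 96)]%N.

End FreeBoson.

From Pilot Require Import Defs.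
From mathcomp Require Import all_boot all_order all_algebra algC.
Set Implicit Arguments. Unset Strict Implicit. Unset Printing Implicit Defensive.
Import Order.TTheory GRing.Theory Num.Theory.
Local Open Scope ring_scope.

(* Each identity [x] = [y] is witnessed by an explicit element of O(H^+) equal
   to x - y: a rational combination of Zhu products u o v of monomials u, v with
   an even number of Heisenberg letters, hence in H^+.  Only the indices a and b
   occur, so the witness lives in rank 2 over the rationals, where checking it
   is a finite computation.  All constructions of the Fock space are natural in
   the scalar ring and in injective relabellings of the basis of h, so the check
   transfers to rank l (along 0 -> a, 1 -> b) and to algC (along rat -> algC). *)

(* The constructions of [Defs] with the scalars algC replaced by an arbitrary
   ring; at R = algC they coincide with the originals by conversion. *)
Section GenericScalars.
Variables (R : pzRingType) (l : nat).
Local Notation rvec := (seq (R * mono l)).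

Definition coefR (w : rvec) (m : mono l) : R := \sum_(x <- w | perm_eq x.2 m) x.1.
Definition vscaleR (c : R) (x : rvec) : rvec := [seq (c * t.1, t.2) | t <- x].
Definition vsubR (x y : rvec) : rvec := x ++ vscaleR (-1) y.
Definition wtmaxR (w : rvec) : nat := foldr maxn 0%N [seq weight t.2 | t <- w].
Definition createR (a : 'I_l) (n : nat) (w : rvec) : rvec :=
  [seq (t.1, (a, n) :: t.2) | t <- w].
Definition annihR (a : 'I_l) (n : nat) (w : rvec) : rvec :=
  [seq (t.1 * (n * count_mem (a, n) t.2)%:R, rem (a, n) t.2) | t <- w].

Fixpoint modeMR (u : mono l) (q : int) (w : rvec) {struct u} : rvec :=
  match u with
  | [::] => if q == (-1)%R then w else [::]
  | p :: v =>
      flatten [seq vscaleR ('C(p.2 + i - 1, i))%:R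
                     (createR p.1 (p.2 + i) (modeMR v (q + i%:Z) w))
                   ++ vscaleR (- ((-1) ^+ p.2 * ('C(p.2 + i - 1, i))%:R))
                        (modeMR v (q - p.2%:Z - i%:Z) (annihR p.1 i w))
              | i <- iota 0 (wtmaxR w + weight v + absz q).+1]
  end.

Definition vmodeR (u : rvec) (q : int) (w : rvec) : rvec :=
  flatten [seq vscaleR t.1 (modeMR t.2 q w) | t <- u].
Definition circR (k : nat) (u v : rvec) : rvec :=
  flatten [seq vscaleR ('C(k, i))%:R (vmodeR u (i%:Z - 2) v) | i <- iota 0 k.+1].
Definition lcR (a b : 'I_l) (cs : seq (nat * nat)) : rvec :=
  flatten [seq vscaleR c.2%:R [:: (1, [:: (a, 1%N); (b, c.1)])] | c <- cs].

End GenericScalars.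

Section NormalForm.
Variables (R : pzRingType) (l : nat).
Local Notation rvec := (seq (R * mono l)).
Local Notation table := (seq (mono l * R)).

Fixpoint nf_add (m : mono l) (c : R) (L : table) : table :=
  match L with
  | [::] => [:: (m, c)]
  | e :: L' => if perm_eq e.1 m then (e.1, e.2 + c) :: L' else e :: nf_add m c L'
  end.
Definition nf_coef (L : table) (m : mono l) : R :=
  foldr (fun e acc => (if perm_eq e.1 m then e.2 else 0) + acc) 0 L.
Definition nf (x : rvec) : table := foldr (fun t L => nf_add t.2 t.1 L) [::] x.
(* The [let]s make the normal forms be computed only once under [vm_compute]. *)
Definition veqb (x y : rvec) : bool :=
  let X := nf x in let Y := nf y in
  all (fun e => nf_coef X e.1 == nf_coef Y e.1) (X ++ Y).

Lemma nf_coef_add m c L m' :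
  nf_coef (nf_add m c L) m' = (if perm_eq m m' then c else 0) + nf_coef L m'.
Proof.
elim: L => [|e L IH] /=; first by rewrite /nf_coef /= addr0.
case: ifP => pem /=; last by rewrite IH addrCA.
rewrite ((permPl pem) m'); case: (perm_eq m m'); rewrite ?addr0 ?add0r //.
by rewrite addrA [e.2 + c]addrC.
Qed.

Lemma coefR_nf x m : coefR x m = nf_coef (nf x) m.
Proof.
elim: x => [|t x IH]; first by rewrite /coefR big_nil.
by rewrite /coefR big_cons -/(coefR x m) IH /= nf_coef_add; case: ifP; rewrite ?add0r.
Qed.

Lemma nf_coef_perm L m m' : perm_eq m m' -> nf_coef L m = nf_coef L m'.
Proof. by move=> pmm'; elim: L => //= e L ->; rewrite ((permPr pmm') e.1). Qed.

Lemma nf_coef_out L m : (forall e, e \in L -> ~~ perm_eq e.1 m) -> nf_coef L m = 0.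
Proof.
elim: L => //= e L IH Lm.
rewrite IH => [|e' e'L]; last by apply: Lm; rewrite in_cons e'L orbT.
by rewrite (negbTE (Lm e (mem_head _ _))) addr0.
Qed.

Lemma veqbP x y : veqb x y -> forall m, coefR x m = coefR y m.
Proof.
move=> /allP xy m; rewrite !coefR_nf.
have [[e exy pem]|/hasPn xy_m] := altP (@hasP _ (fun e => perm_eq e.1 m) (nf x ++ nf y)).
  by rewrite -!(nf_coef_perm _ pem); apply/eqP/xy.
by rewrite !nf_coef_out // => e ex; apply: xy_m; rewrite mem_cat ex ?orbT.
Qed.

End NormalForm.

Section Relabel.
Variables (R S : pzRingType) (f : {rmorphism R -> S}) (k l : nat) (g : 'I_k -> 'I_l).

Definition relabel (p : 'I_k * nat) : 'I_l * nat := (g p.1, p.2).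
Definition mapm (m : mono k) : mono l := map relabel m.
Definition mapv (w : seq (R * mono k)) : seq (S * mono l) :=
  [seq (f t.1, mapm t.2) | t <- w].

Lemma mapv_cat x y : mapv (x ++ y) = mapv x ++ mapv y.
Proof. exact: map_cat. Qed.

Lemma mapv_flatten s : mapv (flatten s) = flatten (map mapv s).
Proof. exact: map_flatten. Qed.

Lemma weight_mapm m : weight (mapm m) = weight m.
Proof. by elim: m => //= p m; rewrite /weight /= => ->. Qed.

Lemma wtmax_mapv w : wtmaxR (mapv w) = wtmaxR w.
Proof. by elim: w => //= t w; rewrite /wtmaxR /= weight_mapm => ->. Qed.

Lemma mapv_scale c x : mapv (vscaleR c x) = vscaleR (f c) (mapv x).
Proof. by elim: x => //= t x ->; rewrite rmorphM. Qed.

Lemma mapv_vsub x y : mapv (vsubR x y) = vsubR (mapv x) (mapv y).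
Proof. by rewrite /vsubR mapv_cat mapv_scale rmorphN1. Qed.

Lemma mapv_create a n w : mapv (createR a n w) = createR (g a) n (mapv w).
Proof. by elim: w => //= t w ->. Qed.

Lemma mapv_lc a b cs : mapv (lcR R a b cs) = lcR S (g a) (g b) cs.
Proof.
rewrite /lcR mapv_flatten -map_comp; congr flatten; apply: eq_map => c /=.
by rewrite rmorphM rmorph_nat rmorph1.
Qed.

Hypothesis g_inj : injective g.

Lemma relabel_inj : injective relabel.
Proof. by move=> [i n] [j m] /= [/g_inj -> ->]. Qed.

Lemma count_mapm a n m : count_mem (g a, n) (mapm m) = count_mem (a, n) m.
Proof. by elim: m => //= [[b j] m] ->; rewrite /= !xpair_eqE (inj_eq g_inj). Qed.

Lemma rem_mapm a n m : rem (g a, n) (mapm m) = mapm (rem (a, n) m).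
Proof.
elim: m => //= [[b j] m] IH; rewrite /= !xpair_eqE (inj_eq g_inj).
by case: ifP => //= _; rewrite IH.
Qed.

Lemma mapv_annih a n w : mapv (annihR a n w) = annihR (g a) n (mapv w).
Proof. by elim: w => //= t w ->; rewrite rmorphM rmorph_nat count_mapm rem_mapm. Qed.

Lemma mapv_modeM u q w : mapv (modeMR u q w) = modeMR (mapm u) q (mapv w).
Proof.
elim: u q w => [|[a n] v IH] q w; first by rewrite /=; case: ifP.
cbn [modeMR mapm map relabel fst snd].
rewrite mapv_flatten -map_comp wtmax_mapv weight_mapm; congr flatten.
apply: eq_map => i /=; rewrite mapv_cat !mapv_scale mapv_create !IH mapv_annih.
by rewrite rmorphN rmorphM rmorphXn rmorphN1 !rmorph_nat.
Qed.

Lemma mapv_vmode u q w : mapv (vmodeR u q w) = vmodeR (mapv u) q (mapv w).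
Proof.
rewrite /vmodeR mapv_flatten -!map_comp; congr flatten; apply: eq_map => t /=.
by rewrite mapv_scale mapv_modeM.
Qed.

Lemma mapv_circ n u v : mapv (circR n u v) = circR n (mapv u) (mapv v).
Proof.
rewrite /circR mapv_flatten -!map_comp; congr flatten; apply: eq_map => i /=.
by rewrite mapv_scale mapv_vmode rmorph_nat.
Qed.

Lemma coef_mapv x m : coefR (mapv x) (mapm m) = f (coefR x m).
Proof.
rewrite /coefR big_map rmorph_sum; apply: eq_bigl => t /=.
by apply/idP/idP => [/(perm_map_inj relabel_inj)|/(perm_map relabel)].
Qed.

Lemma coef_mapv_out x m :
  (forall t, t \in x -> ~~ perm_eq (mapm t.2) m) -> coefR (mapv x) m = 0.
Proof.
move=> xm; rewrite /coefR big_map big_seq_cond big1 // => t /andP [tx pm].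
by move: (xm t tx); rewrite pm.
Qed.

Lemma coef_mapv_eq x y :
  (forall m, coefR x m = coefR y m) -> forall m, coefR (mapv x) m = coefR (mapv y) m.
Proof.
move=> xy m.
have [[t _ pm]|/hasPn xy_m] := altP (@hasP _ (fun t => perm_eq (mapm t.2) m) (x ++ y)).
  have coef_perm z : coefR (mapv z) m = coefR (mapv z) (mapm t.2).
    by apply: eq_bigl => s; rewrite ((permPr pm) s.2).
  by rewrite !coef_perm !coef_mapv xy.
by rewrite !coef_mapv_out // => t tx; apply: xy_m; rewrite mem_cat tx ?orbT.
Qed.

End Relabel.

Lemma homog_mono l (c : algC) (m : mono l) : homog (weight m) [:: (c, m)].
Proof.
move=> m'; rewrite /coef big_cons big_nil addr0.
case: ifP => [pmm' _ | _]; last by rewrite eqxx.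
by apply/esym/perm_sumn/perm_map.
Qed.

Lemma inHplus_mono l (c : algC) (m : mono l) :
  ~~ odd (size m) -> all (fun p => 0 < p.2)%N m -> inHplus [:: (c, m)].
Proof.
move=> even_m pos_m; split; first by rewrite /wf /= pos_m.
by rewrite /theta /= -signr_odd (negbTE even_m) mul1r.
Qed.

Section Certificates.
Variable k : nat.

Definition hplus_mono (m : mono k) : bool :=
  ~~ odd (size m) && all (fun p => 0 < p.2)%N m.
Definition cert_ok (C : seq (rat * mono k * mono k)) : bool :=
  all (fun t => hplus_mono t.1.2 && hplus_mono t.2) C.
(* A certificate lists triples (c, u, v) standing for u o (c v). *)
Definition cert_sum (C : seq (rat * mono k * mono k)) : seq (rat * mono k) :=
  flatten [seq circR (weight t.1.2) [:: (1, t.1.2)] [:: (t.1.1, t.2)] | t <- C].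

Lemma zhu_eq_cert l (g : 'I_k -> 'I_l) (C : seq (rat * mono k * mono k)) x y :
    injective g -> cert_ok C -> veqb (vsubR x y) (cert_sum C) ->
  zhu_eq (mapv ratr g x) (mapv ratr g y).
Proof.
move=> g_inj /allP C_ok xyC.
pose mapt (t : rat * mono k * mono k) : nat * vec l * vec l :=
  (weight t.1.2, mapv ratr g [:: (1, t.1.2)], mapv ratr g [:: (t.1.1, t.2)]).
exists (map mapt C); split.
  move=> _ /mapP [[[c u] v] /C_ok /andP [/andP [u_even u_pos] /andP [v_even v_pos]] ->].
  rewrite /= -{1}(weight_mapm g u).
  by split; [apply: inHplus_mono | exact: homog_mono | apply: inHplus_mono];
    rewrite ?size_map ?all_map.
have -> : vsub (mapv ratr g x) (mapv ratr g y) = mapv ratr g (vsubR x y).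
  by rewrite mapv_vsub.
have -> : vsum [seq circ t.1.1 t.1.2 t.2 | t <- map mapt C] = mapv ratr g (cert_sum C).
  by rewrite mapv_flatten -!map_comp; congr flatten; apply: eq_map => t /=; rewrite mapv_circ.
exact: coef_mapv_eq (veqbP xyC).
Qed.

End Certificates.

Definition ha (n : nat) : 'I_2 * nat := (ord0, n).
Definition hb (n : nat) : 'I_2 * nat := (ord_max, n).

Definition Eu_cert : seq (rat * mono 2 * mono 2) :=
  [:: (-1/2, [:: ha 1; hb 1], [::]);
     (-8/3, [:: ha 1; hb 1], [:: ha 1; ha 2]);
     (80/3, [:: ha 1; ha 1], [:: ha 2; hb 1]);
     (-34/3, [:: ha 1; ha 1], [:: ha 2; hb 2]);
     (-20, [:: ha 1; hb 1], [:: ha 1; ha 1]);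
     (20, [:: ha 1; ha 1], [:: ha 1; hb 1]);
     (10, [:: ha 1; ha 1], [:: ha 1; hb 2]);
     (8/3, [:: ha 1; ha 2], [:: ha 1; hb 2]);
     (68/3, [:: ha 1; ha 1], [:: ha 3; hb 1]);
     (52/3, [:: ha 1; hb 1], [:: ha 2; ha 2]);
     (-68/3, [:: ha 1; ha 2], [:: ha 1; hb 1]);
     (-52/3, [:: ha 1; ha 2], [:: ha 2; hb 1]);
     (-1/2, [:: ha 1; hb 2], [::]);
     (52/3, [:: ha 1; hb 2], [:: hb 1; hb 1]);
     (68/3, [:: ha 1; hb 1], [:: hb 1; hb 2]);
     (20, [:: ha 1; hb 1], [:: hb 2; hb 2]);
     (-68/3, [:: hb 1; hb 1], [:: ha 1; hb 2]);
     (-20, [:: hb 1; hb 1], [:: ha 2; hb 2]);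
     (8/3, [:: ha 1; hb 2], [:: ha 1; ha 2]);
     (20, [:: ha 1; hb 2], [:: hb 1; hb 2]);
     (1/2, [:: ha 2; hb 1], [::]);
     (-52/3, [:: hb 1; hb 2], [:: ha 1; hb 1]);
     (-20, [:: hb 1; hb 2], [:: ha 1; hb 2]);
     (-8/3, [:: ha 2; ha 2], [:: ha 1; hb 1]);
     (-8/3, [:: ha 2; hb 2], [:: ha 1; ha 1])].

Definition Et_cert : seq (rat * mono 2 * mono 2) :=
  [:: (32/3, [:: ha 1; hb 1], [:: ha 1; ha 2]);
     (-112, [:: ha 1; ha 1], [:: ha 2; hb 1]);
     (136/3, [:: ha 1; ha 1], [:: ha 2; hb 2]);
     (208/3, [:: ha 1; hb 1], [:: ha 1; ha 1]);
     (-208/3, [:: ha 1; ha 1], [:: ha 1; hb 1]);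
     (-104/3, [:: ha 1; ha 1], [:: ha 1; hb 2]);
     (-32/3, [:: ha 1; ha 2], [:: ha 1; hb 2]);
     (-272/3, [:: ha 1; ha 1], [:: ha 3; hb 1]);
     (-208/3, [:: ha 1; hb 1], [:: ha 2; ha 2]);
     (304/3, [:: ha 1; ha 2], [:: ha 1; hb 1]);
     (208/3, [:: ha 1; ha 2], [:: ha 2; hb 1]);
     (-176/3, [:: ha 1; hb 2], [:: hb 1; hb 1]);
     (-304/3, [:: ha 1; hb 1], [:: hb 1; hb 2]);
     (-80, [:: ha 1; hb 1], [:: hb 2; hb 2]);
     (304/3, [:: hb 1; hb 1], [:: ha 1; hb 2]);
     (80, [:: hb 1; hb 1], [:: ha 2; hb 2]);
     (-32/3, [:: ha 1; hb 2], [:: ha 1; ha 2]);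
     (-80, [:: ha 1; hb 2], [:: hb 1; hb 2]);
     (-32/3, [:: ha 2; hb 1], [:: ha 1; ha 1]);
     (176/3, [:: hb 1; hb 2], [:: ha 1; hb 1]);
     (80, [:: hb 1; hb 2], [:: ha 1; hb 2]);
     (32/3, [:: ha 2; ha 2], [:: ha 1; hb 1]);
     (32/3, [:: ha 2; hb 2], [:: ha 1; ha 1])].

Definition Lambda_cert : seq (rat * mono 2 * mono 2) :=
  [:: (-8, [:: ha 1; ha 1], [:: ha 2; hb 1]);
     (-16, [:: ha 1; hb 1], [:: ha 1; ha 1]);
     (16, [:: ha 1; ha 1], [:: ha 1; hb 1]);
     (8, [:: ha 1; ha 1], [:: ha 1; hb 2]);
     (16, [:: ha 1; ha 2], [:: ha 1; hb 1]);
     (-1, [:: ha 1; hb 2], [::]);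
     (16, [:: ha 1; hb 2], [:: hb 1; hb 1]);
     (-16, [:: ha 1; hb 1], [:: hb 1; hb 2]);
     (16, [:: hb 1; hb 1], [:: ha 1; hb 2]);
     (1, [:: ha 2; hb 1], [::]);
     (-16, [:: ha 2; hb 1], [:: ha 1; ha 1]);
     (-16, [:: hb 1; hb 2], [:: ha 1; hb 1])].

Lemma Eu_cert_ok : cert_ok Eu_cert. Proof. by []. Qed.
Lemma Et_cert_ok : cert_ok Et_cert. Proof. by []. Qed.
Lemma Lambda_cert_ok : cert_ok Lambda_cert. Proof. by []. Qed.

Lemma Eu_cert_sum :
  veqb (vsubR (lcR rat ord_max ord0 [:: (2, 5); (3, 25); (4, 36); (5, 16)]%N)
              (lcR rat ord0 ord_max [:: (1, 1); (2, 14); (3, 41); (4, 44); (5, 16)]%N))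
       (cert_sum Eu_cert).
Proof. by vm_compute. Qed.

Lemma Et_cert_sum :
  veqb (vsubR (vscaleR (-16) (lcR rat ord_max ord0 [:: (2, 3); (3, 14); (4, 19); (5, 8)]%N))
              (vscaleR (-16) (lcR rat ord0 ord_max [:: (2, 5); (3, 18); (4, 21); (5, 8)]%N)))
       (cert_sum Et_cert).
Proof. by vm_compute. Qed.

Lemma Lambda_cert_sum :
  veqb (vsubR (lcR rat ord0 ord_max [:: (2, 45); (3, 190); (4, 240); (5, 96)]%N)
              (lcR rat ord_max ord0 [:: (2, 45); (3, 190); (4, 240); (5, 96)]%N))
       (cert_sum Lambda_cert).
Proof. by vm_compute. Qed.

Definition pair_ord l (a b : 'I_l) (i : 'I_2) : 'I_l := if i == ord0 then a else b.

Lemma pair_ord_inj l (a b : 'I_l) : a != b -> injective (pair_ord a b).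
Proof.
move=> neq_ab i j; have ord2 (t : 'I_2) : t != ord0 -> t = ord_max.
  by case: t => [[|[|t]] //= t2] _; apply: val_inj.
rewrite /pair_ord; case: eqVneq => [->|/ord2 ->]; case: eqVneq => [->|/ord2 ->] //= eq_ab;
  by move: neq_ab; rewrite eq_ab eqxx.
Qed.

Theorem lemma5p1p1 (l : nat) (a b : 'I_l) (hab : a != b) :
  [/\ zhu_eq (Eu b a) (Eubar_ba a b),
      zhu_eq (Et b a) (Etbar_ba a b)
    & zhu_eq (Lambda a b) (Lambda b a)].
Proof.
have transfer := zhu_eq_cert (pair_ord_inj hab).
split.
- by move: (transfer _ _ _ Eu_cert_ok Eu_cert_sum); rewrite !mapv_lc.
- move: (transfer _ _ _ Et_cert_ok Et_cert_sum).
  by rewrite !mapv_scale !mapv_lc rmorphN rmorph_nat.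
- by move: (transfer _ _ _ Lambda_cert_ok Lambda_cert_sum); rewrite !mapv_lc.
Qed.
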